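(* Let $R$ be a separative exchange ring in which $2$ is invertible, and let $a\in R$ be such that $a-a^3$ is regular in $R$. If $R(1-a^2)R=Rr(a)=\ell(a)R$, then $a$ is unit-regular.
   Context: All rings are associative with identity; modules are right modules. An element $x\in R$ is regular if $x=xyx$ for some $y\in R$, and unit-regular if $x=xux$ for some unit $u\in R$. $R$ is an exchange ring if for every $x\in R$ there is an idempotent $e\in xR$ with $1-e\in(1-x)R$. $R$ is separative if for all finitely generated projective right $R$-modules $A,B$: $A\oplus A\cong A\oplus B\cong B\oplus B$ implies $A\cong B$. For $a\in R$, $r(a)=\{x\in R: ax=0\}$ and $\ell(a)=\{x\in R: xa=0\}$; $Rr(a)$ and $\ell(a)R$ denote the (two-sided) ideals generated by these sets (sums of products), and $R(1-a^2)R$ the two-sided ideal generated by $1-a^2$. *)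

From HB Require Import structures.
From mathcomp Require Import all_boot all_order all_algebra.
Set Implicit Arguments. Unset Strict Implicit. Unset Printing Implicit Defensive.
Import GRing.Theory.
Local Open Scope ring_scope.

Definition is_unit (R : pzRingType) (u : R) : Prop :=
  exists v : R, u * v = 1 /\ v * u = 1.

Definition regular (R : pzRingType) (x : R) : Prop :=
  exists y : R, x = x * y * x.

Definition unit_regular (R : pzRingType) (x : R) : Prop :=
  exists u : R, is_unit u /\ x = x * u * x.

Definition exchange_ring (R : pzRingType) : Prop :=
  forall x : R, exists e : R,
    e * e = e /\ (exists s : R, e = x * s) /\ (exists t : R, 1 - e = (1 - x) * t).

(* Finitely generated projective right R-modules are represented, up to
   isomorphism, by idempotent square matrices E (the module E R^n of columns).
   Hom(E R^n, F R^m) = F M_{m,n} E, so E R^n ~ F R^m iff there are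
   X in F M_{m,n} E and Y in E M_{n,m} F with Y X = E and X Y = F. *)
Definition mx_idem (R : pzRingType) (n : nat) (E : 'M[R]_n) : Prop :=
  E *m E = E.

Definition fgp_iso (R : pzRingType) (n m : nat) (E : 'M[R]_n) (F : 'M[R]_m) : Prop :=
  exists (X : 'M[R]_(m, n)) (Y : 'M[R]_(n, m)),
    X = F *m X *m E /\ Y = E *m Y *m F /\ Y *m X = E /\ X *m Y = F.

Definition fgp_sum (R : pzRingType) (n m : nat) (E : 'M[R]_n) (F : 'M[R]_m)
  : 'M[R]_(n + m) := block_mx E 0 0 F.

Definition separative (R : pzRingType) : Prop :=
  forall (n m : nat) (E : 'M[R]_n) (F : 'M[R]_m),
    mx_idem E -> mx_idem F ->
    fgp_iso (fgp_sum E E) (fgp_sum E F) ->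
    fgp_iso (fgp_sum E F) (fgp_sum F F) ->
    fgp_iso E F.

Definition rann (R : pzRingType) (a : R) : R -> Prop := fun x => a * x = 0.
Definition lann (R : pzRingType) (a : R) : R -> Prop := fun x => x * a = 0.

Inductive ideal_gen (R : pzRingType) (S : R -> Prop) : R -> Prop :=
  | ig_base x : S x -> ideal_gen S x
  | ig_zero : ideal_gen S 0
  | ig_add x y : ideal_gen S x -> ideal_gen S y -> ideal_gen S (x + y)
  | ig_mull r x : ideal_gen S x -> ideal_gen S (r * x)
  | ig_mulr x r : ideal_gen S x -> ideal_gen S (x * r).

Definition same_ideal (R : pzRingType) (I J : R -> Prop) : Prop :=
  forall x, I x <-> J x.

From HB Require Import structures.
From mathcomp Require Import all_boot all_order all_algebra.
From Stdlib Require Import Setoid Morphisms.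
Set Implicit Arguments. Unset Strict Implicit. Unset Printing Implicit Defensive.
Import GRing.Theory.
Local Open Scope ring_scope.

(* Put q = 1 - a^2. An inner inverse of a - a^3 = a q yields an idempotent p = q z with
   (1 - p) a p = 0, so for the Peirce decomposition 1 = h + p the element a is lower
   triangular and h a h is its own inverse in hRh; hence a is regular and d = p a p is regular
   in pRp, with a reflexive inverse y there.  The annihilators of a are controlled by the
   complements p - y d and p - d y, so the ideal hypotheses put q, hence p, in the ideals
   generated by both.  As pR = ydR + (p - yd)R = dyR + (p - dy)R with ydR and dyR isomorphic,
   separativity cancels the common summand (Ara-Goodearl-O'Meara-Pardo), which makes d
   unit-regular in pRp; left multiplication by the unit 1 - (p a h)(h a h) makes a block
   diagonal, which lifts this to a. *)

Section FGProjectives.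
Variable R : pzRingType.

Record fgproj := FGProj { fgp_dim : nat; fgp_mx : 'M[R]_fgp_dim; fgp_idem : mx_idem fgp_mx }.

Definition proj_iso (A B : fgproj) : Prop := fgp_iso (fgp_mx A) (fgp_mx B).

Lemma idem_corner_mull n m (E : 'M[R]_n) (F : 'M[R]_m) (X : 'M[R]_(n, m)) :
  mx_idem E -> X = E *m X *m F -> E *m X = X.
Proof. by move=> hE ->; rewrite !mulmxA hE. Qed.

Lemma idem_corner_mulr n m (E : 'M[R]_n) (F : 'M[R]_m) (X : 'M[R]_(n, m)) :
  mx_idem F -> X = E *m X *m F -> X *m F = X.
Proof. by move=> hF ->; rewrite -!mulmxA hF. Qed.

Lemma proj_iso_refl (A : fgproj) : proj_iso A A.
Proof. by case: A => n E hE; exists E, E; rewrite /= !hE. Qed.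

Lemma proj_iso_sym (A B : fgproj) : proj_iso A B -> proj_iso B A.
Proof. by case=> X [Y [? [? [? ?]]]]; exists Y, X. Qed.

Lemma proj_iso_trans (A B C : fgproj) : proj_iso A B -> proj_iso B C -> proj_iso A C.
Proof.
case: A B C => [n E hE] [m F hF] [k G hG]; rewrite /proj_iso /=.
move=> [X1 [Y1 [a1 [b1 [c1 d1]]]]] [X2 [Y2 [a2 [b2 [c2 d2]]]]].
exists (X2 *m X1), (Y1 *m Y2); split; last split; last split.
- by rewrite !mulmxA (idem_corner_mull hG a2) -mulmxA (idem_corner_mulr hE a1).
- by rewrite !mulmxA (idem_corner_mull hE b1) -mulmxA (idem_corner_mulr hG b2).
- by rewrite mulmxA -(mulmxA Y1) c2 (idem_corner_mulr hF b1) c1.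
- by rewrite mulmxA -(mulmxA X2) d1 (idem_corner_mulr hF a2) d2.
Qed.

Lemma fgp_sum_idem n m (E : 'M[R]_n) (F : 'M[R]_m) :
  mx_idem E -> mx_idem F -> mx_idem (fgp_sum E F).
Proof.
move=> hE hF; rewrite /mx_idem /fgp_sum mulmx_block hE hF.
by rewrite !mulmx0 !mul0mx !addr0 !add0r.
Qed.

Definition proj_add (A B : fgproj) : fgproj := FGProj (fgp_sum_idem (fgp_idem A) (fgp_idem B)).

Lemma mx_idem0 : mx_idem (0 : 'M[R]_0).
Proof. by rewrite /mx_idem mulmx0. Qed.

Definition proj0 : fgproj := FGProj mx_idem0.

Fixpoint proj_muln (k : nat) (A : fgproj) : fgproj :=
  if k is k'.+1 then proj_add A (proj_muln k' A) else proj0.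

Lemma proj_iso_eq n (E E' : 'M[R]_n) (hE : mx_idem E) (hE' : mx_idem E') :
  E = E' -> proj_iso (FGProj hE) (FGProj hE').
Proof. by move=> eE; subst E'; apply: (proj_iso_refl (FGProj hE)). Qed.

Lemma proj_iso_cast n n' (e : n = n') (E : 'M[R]_n) (hE : mx_idem E)
  (hE' : mx_idem (castmx (e, e) E)) : proj_iso (FGProj hE) (FGProj hE').
Proof. by case: n' / e hE' => hE'; apply: proj_iso_eq; rewrite castmx_id. Qed.

Lemma proj_add_congr (A A' B B' : fgproj) :
  proj_iso A A' -> proj_iso B B' -> proj_iso (proj_add A B) (proj_add A' B').
Proof.
case: A A' B B' => [n1 E1 h1] [n2 E2 h2] [m1 F1 k1] [m2 F2 k2]; rewrite /proj_iso /=.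
move=> [X1 [Y1 [a1 [b1 [c1 d1]]]]] [X2 [Y2 [a2 [b2 [c2 d2]]]]].
exists (block_mx X1 0 0 X2), (block_mx Y1 0 0 Y2); rewrite /fgp_sum.
rewrite !mulmx_block !mulmx0 !mul0mx !addr0 !add0r -a1 -a2 -b1 -b2 c1 c2 d1 d2.
by rewrite ?mul0mx ?mulmx0 ?addr0 ?add0r; do !split.
Qed.

Lemma proj_addC (A B : fgproj) : proj_iso (proj_add A B) (proj_add B A).
Proof.
case: A B => [n E hE] [m F hF]; rewrite /proj_iso /=.
exists (block_mx 0 F E 0), (block_mx 0 E F 0); rewrite /fgp_sum.
rewrite !mulmx_block !mulmx0 !mul0mx !addr0 !add0r hE hF.
by move: hE hF; rewrite /mx_idem => -> ->; rewrite !mul0mx; do !split.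
Qed.

Lemma proj_addA (A B C : fgproj) :
  proj_iso (proj_add (proj_add A B) C) (proj_add A (proj_add B C)).
Proof.
case: A B C => [n E hE] [m F hF] [k G hG].
have hEFG := fgp_sum_idem (fgp_sum_idem hE hF) hG.
pose e := esym (addnA n m k).
have hEFG' : mx_idem (castmx (e, e) (fgp_sum (fgp_sum E F) G)).
  by move: hEFG; rewrite /mx_idem; case: _ / e => H; rewrite castmx_id.
apply: (proj_iso_trans (proj_iso_cast hEFG hEFG')); apply: proj_iso_eq.
rewrite /fgp_sum -[0 : 'M_(n, m + k)]row_mx0 -[0 : 'M_(m + k, n)]col_mx0.
by rewrite block_mxA row_mx0 col_mx0.
Qed.

Lemma proj_add0 (A : fgproj) : proj_iso (proj_add A proj0) A.
Proof.
case: A => n E hE; rewrite /proj_iso /=; move: hE; rewrite /mx_idem => hE.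
exists (row_mx E 0), (col_mx E 0); rewrite /fgp_sum.
rewrite mul_mx_row mul_row_block mul_row_col mul_col_row !mulmx0 !mul0mx !addr0 hE.
by rewrite mul_block_col mul_col_mx !mulmx0 !mul0mx !addr0 !hE mul0mx.
Qed.

End FGProjectives.

#[export] Instance proj_iso_Equivalence (R : pzRingType) : Equivalence (@proj_iso R).
Proof. split; [exact: proj_iso_refl | exact: proj_iso_sym | exact: proj_iso_trans]. Qed.

#[export] Instance proj_add_Proper (R : pzRingType) :
  Proper (@proj_iso R ==> @proj_iso R ==> @proj_iso R) (@proj_add R).
Proof. by move=> A A' hA B B' hB; apply: proj_add_congr. Qed.

#[export] Hint Resolve proj_iso_refl : core.

Section SeparativeCancellation.
Variable R : pzRingType.
Hypothesis sep : separative R.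
Implicit Types A B C D : fgproj R.

Lemma proj_add0l A : proj_iso (proj_add (proj0 R) A) A.
Proof. by rewrite proj_addC; apply: proj_add0. Qed.

Lemma proj_muln_add A m n :
  proj_iso (proj_muln (m + n) A) (proj_add (proj_muln m A) (proj_muln n A)).
Proof.
elim: m => [|m IH] /=; first by rewrite proj_add0l.
by rewrite IH proj_addA.
Qed.

Lemma proj_muln_shift A i j k l : (i + j = k + l)%N ->
  proj_iso (proj_add (proj_muln i A) (proj_muln j A))
           (proj_add (proj_muln k A) (proj_muln l A)).
Proof. by move=> e; rewrite -!proj_muln_add e. Qed.

Lemma proj_addCA A B C :
  proj_iso (proj_add A (proj_add B C)) (proj_add B (proj_add A C)).
Proof. by rewrite -proj_addA (proj_addC A B) proj_addA. Qed.

Lemma proj_addACA A B C D :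
  proj_iso (proj_add (proj_add A B) (proj_add C D)) (proj_add (proj_add A C) (proj_add B D)).
Proof.
rewrite proj_addA -(proj_addA B C D) (proj_addC B C) (proj_addA C B D).
by rewrite -proj_addA.
Qed.

Lemma separative_proj A B :
  proj_iso (proj_add A A) (proj_add A B) -> proj_iso (proj_add A B) (proj_add B B) ->
  proj_iso A B.
Proof. by case: A B => [n E hE] [m F hF]; apply: sep. Qed.

(* Separativity applied to (j+2)A and B + (j+1)A. *)
Lemma separative_muln_step A B j :
  proj_iso (proj_muln j.+3 A) (proj_add B (proj_muln j.+2 A)) ->
  proj_iso (proj_muln j.+2 A) (proj_add B (proj_muln j.+1 A)).
Proof.
move=> K; apply: separative_proj.
- rewrite (proj_muln_shift A (_ : (j.+2 + j.+2 = j.+3 + j.+1)%N)); last by rewrite !addnS.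
  by rewrite K proj_addA proj_addCA.
- rewrite (proj_addC (proj_muln j.+2 A)) proj_addA (proj_addC (proj_muln j.+1 A)).
  rewrite (proj_muln_shift A (_ : (j.+2 + j.+1 = j.+3 + j)%N)); last by rewrite !addnS.
  rewrite K proj_addA -(proj_muln_add A j.+2 j).
  rewrite (_ : (j.+2 + j = j.+1 + j.+1)%N); last by rewrite !addnS.
  by rewrite proj_muln_add proj_addACA -proj_addA.
Qed.

Lemma separative_muln_cancel A B k :
  proj_iso (proj_muln k.+2 A) (proj_add B (proj_muln k.+1 A)) ->
  proj_iso (proj_add A A) (proj_add B A).
Proof.
elim: k => [|k IH] K; first by rewrite /= !proj_add0 in K.
exact/IH/separative_muln_step.
Qed.

Lemma separative_cancel A B C D D' n m :
  proj_iso (proj_add A C) (proj_add B C) ->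
  proj_iso (proj_add C D) (proj_muln n A) -> proj_iso (proj_add C D') (proj_muln m B) ->
  proj_iso A B.
Proof.
have twice_cancel X Y DX k : proj_iso (proj_add X C) (proj_add Y C) ->
    proj_iso (proj_add C DX) (proj_muln k X) -> proj_iso (proj_add X X) (proj_add Y X).
  move=> XY XC; apply: (@separative_muln_cancel X Y k); rewrite /= -XC.
  transitivity (proj_add X (proj_add Y (proj_add C DX))); last by rewrite proj_addCA.
  by apply: proj_add_congr => //; rewrite -!proj_addA XY.
move=> H HA HB; apply: separative_proj.
- by rewrite (twice_cancel A B D n H HA) proj_addC.
- by symmetry; apply: (twice_cancel B A D' m (symmetry H) HB).
Qed.

End SeparativeCancellation.

Notation principal_ideal e := (ideal_gen (fun x => x = e)).

Section IdempotentModules.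
Variable R : pzRingType.
Implicit Types e f p : R.

Definition idem_iso e f : Prop :=
  exists x y, [/\ x = f * x * e, y = e * y * f, y * x = e & x * y = f].

Lemma idem_complement p e : p * p = p -> e * e = e -> e * p = e -> p * e = e ->
  (p - e) * (p - e) = p - e.
Proof. by move=> pp ee ep pe; rewrite mulrBl !mulrBr pp pe ep ee subrr subr0. Qed.

Lemma scalar_mx_idem e : e * e = e -> mx_idem (e%:M : 'M[R]_1).
Proof. by move=> ee; rewrite /mx_idem -scalar_mxM ee. Qed.

Definition proj_of e (ee : e * e = e) : fgproj R := FGProj (scalar_mx_idem ee).

Lemma proj_ofP e f (ee : e * e = e) (ff : f * f = f) :
  proj_iso (proj_of ee) (proj_of ff) <-> idem_iso e f.
Proof.
have scalar_inj (x y : R) : (x%:M : 'M[R]_1) = y%:M -> x = y.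
  by move/(congr1 (fun M : 'M[R]_1 => M 0 0)); rewrite !mxE.
split=> [[X [Y [h1 [h2 [h3 h4]]]]] | [x [y [h1 h2 h3 h4]]]].
- exists (X 0 0), (Y 0 0).
  rewrite [X]mx11_scalar [Y]mx11_scalar -!scalar_mxM in h1 h2 h3 h4.
  by rewrite -(scalar_inj _ _ h1) -(scalar_inj _ _ h2) (scalar_inj _ _ h3) (scalar_inj _ _ h4).
- by exists x%:M, y%:M; rewrite /= -!scalar_mxM -h1 -h2 h3 h4.
Qed.

Lemma proj_iso_split n (K P : 'M[R]_n) (hK : mx_idem K) (hP : mx_idem P)
    (hKP : mx_idem (K - P)) :
  P *m K = P -> K *m P = P -> proj_iso (FGProj hK) (proj_add (FGProj hP) (FGProj hKP)).
Proof.
move=> PK KP; rewrite /proj_iso /=.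
move: hK hP hKP; rewrite /mx_idem => hK hP hKP.
have KP_P : (K - P) *m P = 0 by rewrite mulmxBl KP hP subrr.
have P_KP : P *m (K - P) = 0 by rewrite mulmxBr PK hP subrr.
have KP_K : (K - P) *m K = K - P by rewrite mulmxBl hK PK.
have K_KP : K *m (K - P) = K - P by rewrite mulmxBr hK KP.
exists (col_mx P (K - P)), (row_mx P (K - P)); rewrite /fgp_sum.
split; [|split; [|split]].
- by rewrite mul_block_col mul_col_mx ?mulmx0 ?mul0mx ?addr0 ?add0r hP hKP PK KP_K.
- by rewrite mul_mx_row mul_row_block ?mulmx0 ?mul0mx ?addr0 ?add0r KP K_KP hP hKP.
- by rewrite mul_row_col hP hKP addrC subrK.
- by rewrite mul_col_row hP hKP KP_P P_KP.
Qed.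

Lemma proj_of_split p e (pp : p * p = p) (ee : e * e = e) (pe_idem : (p - e) * (p - e) = p - e) :
  e * p = e -> p * e = e -> proj_iso (proj_of pp) (proj_add (proj_of ee) (proj_of pe_idem)).
Proof.
move=> ep pe; have hKP : mx_idem ((p%:M : 'M[R]_1) - e%:M).
  by rewrite -raddfB; apply: scalar_mx_idem.
apply: proj_iso_trans (proj_iso_split (scalar_mx_idem pp) (scalar_mx_idem ee) hKP _ _) _.
- by rewrite -scalar_mxM ep.
- by rewrite -scalar_mxM pe.
- by apply: proj_add_congr => //; apply: proj_iso_eq; rewrite raddfB.
Qed.

End IdempotentModules.

Lemma ideal_gen_sub (R : pzRingType) (S T : R -> Prop) :
  (forall x, S x -> ideal_gen T x) -> forall x, ideal_gen S x -> ideal_gen T x.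
Proof. by move=> ST x; elim=> *; [exact: ST | constructor..]. Qed.

Section IdealsAndSummands.
Variable R : pzRingType.

Lemma principal_ideal_mx (e : R) (ee : e * e = e) z : principal_ideal e z ->
  exists (K : fgproj R) n, proj_iso K (proj_muln n (proj_of ee)) /\
    exists (u : 'M_(1, fgp_dim K)) (v : 'M_(fgp_dim K, 1)), z%:M = u *m fgp_mx K *m v.
Proof.
elim=> {z}.
- move=> x ->; exists (proj_of ee), 1%N; split; first by rewrite /= proj_add0.
  by exists 1, 1; rewrite mulmx1 mul1mx.
- exists (proj0 R), 0%N; split => //.
  by exists 0, 0; rewrite mulmx0 raddf0.
- move=> x y _ [K1 [n1 [i1 [u1 [v1 e1]]]]] _ [K2 [n2 [i2 [u2 [v2 e2]]]]].
  exists (proj_add K1 K2), (n1 + n2)%N; split; first by rewrite proj_muln_add i1 i2.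
  exists (row_mx u1 u2), (col_mx v1 v2); rewrite /= /fgp_sum mul_row_block.
  by rewrite ?mulmx0 ?mul0mx ?addr0 ?add0r mul_row_col -e1 -e2 raddfD.
- move=> r x _ [K [n [i [u [v ez]]]]]; exists K, n; split => //.
  by exists (r%:M *m u), v; rewrite scalar_mxM ez !mulmxA.
- move=> x r _ [K [n [i [u [v ez]]]]]; exists K, n; split => //.
  by exists u, (v *m r%:M); rewrite scalar_mxM ez !mulmxA.
Qed.

(* The idempotent [K v p u K] splits off a copy of [pR] from [K]. *)
Lemma idem_mx_summand (K : fgproj R) (p : R) (pp : p * p = p)
    (u : 'M_(1, fgp_dim K)) (v : 'M_(fgp_dim K, 1)) :
  p%:M = u *m fgp_mx K *m v -> exists D, proj_iso K (proj_add (proj_of pp) D).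
Proof.
case: K u v => N K hK u v /= puKv; move: (hK); rewrite /mx_idem => KK.
set P : 'M_1 := p%:M in puKv *.
have PP : P *m P = P by rewrite -scalar_mxM pp.
have PPr m (X : 'M_(m, 1)) : X *m P *m P = X *m P by rewrite -mulmxA PP.
have KKr m (X : 'M_(m, N)) : X *m K *m K = X *m K by rewrite -mulmxA KK.
have uKv m (X : 'M_(m, 1)) : X *m u *m K *m v = X *m P by rewrite puKv !mulmxA.
pose Q := K *m v *m P *m u *m K.
have QQ : mx_idem Q by rewrite /mx_idem /Q !mulmxA !KKr uKv !PPr.
have QK : Q *m K = Q by rewrite /Q KKr.
have KQ : K *m Q = Q by rewrite /Q !mulmxA KK.
have hKQ : mx_idem (K - Q).
  by rewrite /mx_idem mulmxBl !mulmxBr KK QK KQ QQ subrr subr0.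
exists (FGProj hKQ); apply: proj_iso_trans (proj_iso_split hK QQ hKQ QK KQ) _.
apply: proj_add_congr => //.
exists (P *m u *m K), (K *m v *m P); split; [|split; [|split]].
- by rewrite /Q !mulmxA PP !KKr uKv !PPr PP.
- by rewrite /Q !mulmxA !KKr uKv !PPr.
- by rewrite /Q !mulmxA PPr.
- by rewrite !mulmxA KKr uKv PPr PP.
Qed.

Lemma principal_ideal_summand (e p : R) (ee : e * e = e) (pp : p * p = p) :
  principal_ideal e p ->
  exists n D, proj_iso (proj_add (proj_of pp) D) (proj_muln n (proj_of ee)).
Proof.
case/(principal_ideal_mx ee) => K [n [Kn [u [v puKv]]]].
have [D KD] := idem_mx_summand pp puKv.
by exists n, D; rewrite -KD.
Qed.

Lemma separative_complement_iso (p e f : R) (pp : p * p = p) (ee : e * e = e)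
    (ff : f * f = f) :
  separative R -> e * p = e -> p * e = e -> f * p = f -> p * f = f -> idem_iso e f ->
  principal_ideal (p - e) p -> principal_ideal (p - f) p -> idem_iso (p - e) (p - f).
Proof.
move=> sep ep pe fp pf /(proj_ofP ee ff) ef pE pF.
have EE := idem_complement pp ee ep pe; have FF := idem_complement pp ff fp pf.
have pe_split := proj_of_split pp ee EE ep pe.
have pf_split := proj_of_split pp ff FF fp pf.
have [n [D nE]] := principal_ideal_summand EE pp pE.
have [m [D' mF]] := principal_ideal_summand FF pp pF.
apply/proj_ofP; apply: (separative_cancel sep (C := proj_of ee) (D := proj_add (proj_of EE) D)
  (D' := proj_add (proj_of FF) D') (n := n) (m := m)).
- by rewrite proj_addC -pe_split pf_split -ef proj_addC.
- by rewrite -nE pe_split proj_addA.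
- by rewrite -mF pf_split ef proj_addA.
Qed.

End IdealsAndSummands.

Section CornerUnitRegularity.
Variables (R : pzRingType) (p d y : R).
Hypotheses (pp : p * p = p) (dpd : d = p * d * p) (ypy : y = p * y * p).
Hypotheses (dyd : d * y * d = d) (ydy : y * d * y = y).

Let pd : p * d = d. Proof. by rewrite dpd !mulrA pp. Qed.
Let dp : d * p = d. Proof. by rewrite dpd -mulrA pp. Qed.
Let py : p * y = y. Proof. by rewrite ypy !mulrA pp. Qed.
Let yp : y * p = y. Proof. by rewrite ypy -mulrA pp. Qed.

(* Ehrlich's construction: [y + s'], with [s'] the isomorphism from the complement of [d y]
   to that of [y d], is a unit of [pRp] and an inner inverse of [d]. *)
Lemma complement_iso_corner_unit :
  idem_iso (p - y * d) (p - d * y) ->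
  exists w w', [/\ w = p * w * p, w' = p * w' * p, w * w' = p, w' * w = p & d * w * d = d].
Proof.
set E := p - y * d; set F := p - d * y.
case=> s [s' [hs hs' s's ss']].
have pE : p * E = E by rewrite /E mulrBr pp mulrA py.
have Ep : E * p = E by rewrite /E mulrBl pp -mulrA dp.
have pF : p * F = F by rewrite /F mulrBr pp mulrA pd.
have Fp : F * p = F by rewrite /F mulrBl pp -mulrA yp.
have yF : y * F = 0 by rewrite /F mulrBr yp mulrA ydy subrr.
have Fd : F * d = 0 by rewrite /F mulrBl pd dyd subrr.
have dE : d * E = 0 by rewrite /E mulrBr dp mulrA dyd subrr.
have Ey : E * y = 0 by rewrite /E mulrBl py ydy subrr.
have ys : y * s = 0 by rewrite hs !mulrA yF !mul0r.
have s'd : s' * d = 0 by rewrite hs' -mulrA Fd mulr0.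
have ds' : d * s' = 0 by rewrite hs' !mulrA dE !mul0r.
have sy : s * y = 0 by rewrite hs -mulrA Ey mulr0.
exists (y + s'), (d + s); split.
- by rewrite mulrDr mulrDl -ypy hs' !mulrA pE -!mulrA Fp.
- by rewrite mulrDr mulrDl -dpd hs !mulrA pF -!mulrA Ep.
- by rewrite !mulrDl !mulrDr ys s'd s's addr0 add0r /E addrC subrK.
- by rewrite !mulrDl !mulrDr ds' sy ss' addr0 add0r /F addrC subrK.
- by rewrite mulrDr mulrDl ds' mul0r addr0 dyd.
Qed.

Lemma separative_corner_unit : separative R ->
  principal_ideal (p - y * d) p -> principal_ideal (p - d * y) p ->
  exists w w', [/\ w = p * w * p, w' = p * w' * p, w * w' = p, w' * w = p & d * w * d = d].
Proof.
move=> sep pE pF; apply: complement_iso_corner_unit.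
have ee : y * d * (y * d) = y * d by rewrite mulrA ydy.
have ff : d * y * (d * y) = d * y by rewrite mulrA dyd.
apply: (separative_complement_iso pp ee ff sep) => //.
- by rewrite -mulrA dp.
- by rewrite mulrA py.
- by rewrite -mulrA yp.
- by rewrite mulrA pd.
- by exists d, y; rewrite !mulrA dyd ydy.
Qed.

End CornerUnitRegularity.

Lemma reflexive_inverse (R : pzRingType) (d x : R) : d * x * d = d ->
  d * (x * d * x) * d = d /\ x * d * x * d * (x * d * x) = x * d * x.
Proof.
move=> dxd; have dxdK u : u * d * x * d = u * d by rewrite -!mulrA (mulrA d x d) dxd.
by split; rewrite !mulrA !dxdK ?dxd.
Qed.

Section LowerTriangular.
Variables (R : pzRingType) (a p h : R).
Hypotheses (pp : p * p = p) (hp1 : h + p = 1).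
Hypotheses (hap : h * a * p = 0) (hah : h * a * h * a * h = h).

Let eh : h = 1 - p. Proof. by rewrite -hp1 addrK. Qed.
Let hh : h * h = h.
Proof. by rewrite eh mulrBr mulr1 mulrBl mul1r pp subrr subr0. Qed.
Let hp : h * p = 0. Proof. by rewrite eh mulrBl mul1r pp subrr. Qed.
Let ph : p * h = 0. Proof. by rewrite eh mulrBr mulr1 pp subrr. Qed.

Local Notation al := (h * a * h).
Local Notation g := (p * a * h).
Local Notation d := (p * a * p).

Let pd : p * d = d. Proof. by rewrite !mulrA pp. Qed.
Let dp : d * p = d. Proof. by rewrite -mulrA pp. Qed.

Let a_decomp : a = al + g + d.
Proof.
rewrite -[a in LHS]mulr1 -[a in LHS]mul1r -hp1 !mulrDl !mulrDr hap addr0.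
by rewrite -addrA.
Qed.
Let al2 : al * al = h. Proof. by rewrite !mulrA -(mulrA _ h h) hh. Qed.
Let alg : al * g = 0. Proof. by rewrite !mulrA -(mulrA _ h p) hp mulr0 !mul0r. Qed.
Let ald : al * d = 0. Proof. by rewrite !mulrA -(mulrA _ h p) hp mulr0 !mul0r. Qed.
Let ala : al * a = h.
Proof. by rewrite -[al * a]mulr1 -hp1 mulrDr hah -!mulrA (mulrA h a p) hap !mulr0 addr0. Qed.

Let shear_unit : (1 - g * al) * (1 + g * al) = 1 /\ (1 + g * al) * (1 - g * al) = 1.
Proof.
have gg : g * al * (g * al) = 0 by rewrite mulrA -(mulrA _ al g) alg mulr0 mul0r.
by rewrite mulrBl mulrDl !mul1r mulrDr mulrBr !mulr1 gg addr0 subr0 addrK subrK.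
Qed.
Let shear_a : (1 - g * al) * a = al + d.
Proof.
rewrite mulrBl mul1r -(mulrA g al a) ala -(mulrA (p * a) h h) hh.
by rewrite {1}a_decomp (addrAC al g d) addrK.
Qed.

Lemma corner_regular x : a * x * a = a ->
  exists y, [/\ y = p * y * p, d * y * d = d & y * d * y = y].
Proof.
move=> axa; set x' := x * (1 + g * al).
have palp : p * (al + d) = d by rewrite mulrDr !mulrA ph !mul0r add0r pp.
have alpp : (al + d) * p = d by rewrite mulrDl -!mulrA hp !mulr0 add0r pp.
have regad : (al + d) * x' * (al + d) = al + d.
  rewrite -shear_a /x'.
  have -> : (1 - g * al) * a * (x * (1 + g * al)) * ((1 - g * al) * a)
      = (1 - g * al) * (a * x * ((1 + g * al) * (1 - g * al)) * a) by rewrite !mulrA.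
  by rewrite (proj2 shear_unit) mulr1 axa.
have dx'd : d * x' * d = d.
  set b := al + d in palp alpp regad.
  rewrite -{1}palp -{1}alpp.
  have -> : p * b * x' * (b * p) = p * (b * x' * b) * p by rewrite !mulrA.
  by rewrite regad palp dp.
pose y0 := p * x' * p.
have [dyd ydy] : d * (y0 * d * y0) * d = d /\ y0 * d * y0 * d * (y0 * d * y0) = y0 * d * y0.
  apply: reflexive_inverse.
  have -> : d * y0 * d = d * p * x' * (p * d) by rewrite /y0 !mulrA.
  by rewrite dp pd.
exists (y0 * d * y0); split => //.
by rewrite /y0 !mulrA pp -!mulrA pp.
Qed.

Lemma rann_corner y z : a * z = 0 -> z = (p - y * d) * z.
Proof.
move=> az; have zs : z = h * z + p * z by rewrite -mulrDl hp1 mul1r.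
have alz : al * z = 0.
  have : h * (a * z) = 0 by rewrite az mulr0.
  by rewrite {1}zs !mulrDr !mulrA hap mul0r addr0.
have hz : h * z = 0.
  have -> : h * z = h * a * (al * z) by rewrite !mulrA hah.
  by rewrite alz mulr0.
have pz : p * z = z by rewrite {2}zs hz add0r.
by rewrite mulrBl pz -(mulrA y) -mulrA pz -mulrA az !mulr0 subr0.
Qed.

Lemma lann_corner y x : x * a = 0 -> x = x * (p - d * y) * (1 - a * h * al).
Proof.
move=> xa; have xs : x = x * h + x * p by rewrite -mulrDr hp1 mulr1.
have xd : x * d = 0.
  have : x * a * p = 0 by rewrite xa mul0r.
  by rewrite {1}xs !mulrDl -(mulrA x h) -(mulrA x) hap mulr0 add0r !mulrA.
have xpah : x * p * a * h = - (x * al).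
  rewrite (_ : x * p = x - x * h); last by rewrite {2}xs addrC addKr.
  by rewrite !mulrBl xa mul0r sub0r !mulrA.
rewrite mulrBr mulrA xd mul0r subr0 mulrBr mulr1 !mulrA xpah !mulNr opprK.
rewrite (_ : x * al * h * a * h = x * (al * a * h)); last by rewrite !mulrA -(mulrA _ h h) hh.
by rewrite hah addrC -xs.
Qed.

Lemma corner_unit_regular w w' :
  w = p * w * p -> w' = p * w' * p -> w * w' = p -> w' * w = p -> d * w * d = d ->
  unit_regular a.
Proof.
move=> wp w'p ww' w'w dwd.
have hw u : h * (p * u * p) = 0 by rewrite !mulrA hp !mul0r.
have wh u : p * u * p * h = 0 by rewrite -mulrA ph mulr0.
have alw : al * w = 0 by rewrite wp -mulrA hw mulr0.
have wal : w * al = 0 by rewrite wp !mulrA wh !mul0r.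
have alw' : al * w' = 0 by rewrite w'p -mulrA hw mulr0.
have w'al : w' * al = 0 by rewrite w'p !mulrA wh !mul0r.
have [shearK shearK'] := shear_unit.
have u1 : (al + w) * (al + w') = 1.
  by rewrite !mulrDl !mulrDr al2 alw' wal ww' addr0 add0r hp1.
have u2 : (al + w') * (al + w) = 1.
  by rewrite !mulrDl !mulrDr al2 alw w'al w'w addr0 add0r hp1.
exists ((al + w) * (1 - g * al)); split.
  exists ((1 + g * al) * (al + w')); split.
  - have -> : (al + w) * (1 - g * al) * ((1 + g * al) * (al + w'))
        = (al + w) * ((1 - g * al) * (1 + g * al)) * (al + w') by rewrite !mulrA.
    by rewrite shearK mulr1 u1.
  - have -> : (1 + g * al) * (al + w') * ((al + w) * (1 - g * al))
        = (1 + g * al) * ((al + w') * (al + w)) * (1 - g * al) by rewrite !mulrA.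
    by rewrite u2 mulr1 shearK'.
have ah : a * h = al + g by rewrite -[a in LHS]mul1r -hp1 mulrDl mulrDl.
have ap : a * p = h * a * p + d by rewrite -!mulrDl hp1 mul1r.
have awd : a * (w * d) = d.
  have pwd : p * (w * d) = w * d by rewrite mulrA wp !mulrA pp.
  by rewrite -pwd mulrA ap hap add0r mulrA dwd.
have -> : a * ((al + w) * (1 - g * al)) * a = a * ((al + w) * ((1 - g * al) * a)).
  by rewrite !mulrA.
rewrite shear_a (_ : (al + w) * (al + d) = h + w * d); last first.
  by rewrite !mulrDl !mulrDr al2 ald wal addr0 add0r.
by rewrite mulrDr ah awd -a_decomp.
Qed.

End LowerTriangular.

Section RegularCubicDefect.
Variables (R : pzRingType) (a q y : R).
Hypotheses (hq : q = 1 - a * a) (aqy : a * q * y * (a * q) = a * q).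

Let aq : a * q = q * a.
Proof. by rewrite hq mulrBl mulrBr mul1r mulr1 mulrA. Qed.
Let aa : a * a = 1 - q.
Proof. by rewrite hq opprB addrC subrK. Qed.

Lemma regular_of_regular_aq : a * (a + q * y * q) * a = a.
Proof.
rewrite mulrDr mulrDl aa (_ : a * (q * y * q) * a = a * q * y * (a * q)); last first.
  by rewrite !mulrA -(mulrA _ q a) -aq !mulrA.
by rewrite aqy mulrBl mul1r -aq subrK.
Qed.

(* With [z = 1 + a y a^2] one has [q z q = q]; the idempotent [p = q z] then satisfies
   [a p = p a p] because [a] commutes with [q]. *)
Lemma regular_aq_triangular : exists2 p,
  [/\ p * p = p, (1 - p) * a * p = 0 & (1 - p) * a * (1 - p) * a * (1 - p) = 1 - p]
  & exists z, p = q * z.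
Proof.
pose z := 1 + a * y * (a * a); pose p := q * z.
suff : [/\ p * p = p, (1 - p) * a * p = 0 & (1 - p) * a * (1 - p) * a * (1 - p) = 1 - p].
  by exists p => //; exists z.
have qzq : q * z * q = q.
  have e : q * a * y * a * a * q = a * q * a.
    rewrite (_ : q * a * y * a * a * q = a * q * y * (a * q) * a); first by rewrite aqy.
    by rewrite -aq !mulrA -(mulrA _ a q) aq !mulrA.
  rewrite /z mulrDr mulr1 mulrDl !mulrA e -mulrA -aq mulrA aa.
  by rewrite -mulrDl addrC subrK mul1r.
have pp : p * p = p by rewrite /p mulrA qzq.
have pq : p * q = q by rewrite /p qzq.
have hq0 : (1 - p) * q = 0 by rewrite mulrBl mul1r pq subrr.
have ap : a * p = p * a * p.
  rewrite /p mulrA aq (_ : q * z * a * (q * z) = q * z * (a * q) * z); last by rewrite !mulrA.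
  by rewrite aq !mulrA qzq.
have hap : (1 - p) * a * p = 0 by rewrite !mulrBl !mul1r -ap subrr.
have haa : (1 - p) * a * a = 1 - p by rewrite -mulrA aa mulrBr mulr1 hq0 subr0.
have hah : (1 - p) * a * (1 - p) = (1 - p) * a by rewrite mulrBr mulr1 hap subr0.
split=> //; rewrite hah haa.
by rewrite mulrBr mulr1 mulrBl mul1r pp subrr subr0.
Qed.

End RegularCubicDefect.

Unset Implicit Arguments.

Theorem theorem2p3 (R : pzRingType) (a : R) :
  separative R -> exchange_ring R -> is_unit (2%:R : R) ->
  regular (a - a ^+ 3) ->
  same_ideal (ideal_gen (fun x : R => x = 1 - a ^+ 2)) (ideal_gen (rann a)) ->
  same_ideal (ideal_gen (rann a)) (ideal_gen (lann a)) ->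
  unit_regular a.
Proof.
move=> sep _ _ [y hy] q_ra ra_la.
pose q := 1 - a ^+ 2.
have hq : q = 1 - a * a by rewrite /q expr2.
have aqy : a * q * y * (a * q) = a * q.
  by rewrite (_ : a * q = a - a ^+ 3) -?hy // hq mulrBr mulr1 exprS expr2.
have [p [pp hap hah] [z pqz]] := regular_aq_triangular hq aqy.
have hp1 : 1 - p + p = 1 := subrK p 1.
have [y' [yp dyd ydy]] := corner_regular pp hp1 hap hah (regular_of_regular_aq hq aqy).
have q_rann : ideal_gen (rann a) q by apply/q_ra/ig_base.
have q_lann : ideal_gen (lann a) q by apply/ra_la.
have pE : principal_ideal (p - y' * (p * a * p)) p.
  rewrite [X in ideal_gen _ X]pqz; apply/ig_mulr/(ideal_gen_sub _ q_rann) => c.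
  by move/(rann_corner hp1 hap hah y') ->; apply/ig_mulr/ig_base.
have pF : principal_ideal (p - p * a * p * y') p.
  rewrite [X in ideal_gen _ X]pqz; apply/ig_mulr/(ideal_gen_sub _ q_lann) => c.
  by move/(lann_corner pp hp1 hap hah y') ->; apply/ig_mulr/ig_mull/ig_base.
have dp : p * a * p = p * (p * a * p) * p by rewrite !mulrA pp -(mulrA _ p p) pp.
have [w [w' [wp w'p ww' w'w dwd]]] := separative_corner_unit pp dp yp dyd ydy sep pE pF.
exact: (corner_unit_regular pp hp1 hap hah wp w'p ww' w'w dwd).
Qed.
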